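(* Let $\{s_j\}_{j=1}^\infty$ be a countable compact subset of $[0,1]$ containing $0$. Let $U(x,y)=\left(\frac{x}{2},\frac{y+1}{2}\right)$ and $D_j(x,y)=\left(\frac{x+s_j}{2},\frac{y}{2}\right)$ for $j\ge1$, and let $K'\subset\mathbb{R}^2$ be the unique non-empty compact set with $K'=U(K')\cup\bigcup_{j\ge1}D_j(K')$. Then $K'$ has empty interior. *)

From Stdlib Require Export Reals Rtopology.
Open Scope R_scope.

Definition pt := (R * R)%type.

Definition ball2 (p : pt) (e : R) (q : pt) : Prop :=
  (fst q - fst p)^2 + (snd q - snd p)^2 < e^2.

Definition open2 (O : pt -> Prop) : Prop :=
  forall p, O p -> exists e, 0 < e /\ forall q, ball2 p e q -> O q.

Definition compact2 (K : pt -> Prop) : Prop :=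
  forall (I : Type) (O : I -> pt -> Prop),
    (forall i, open2 (O i)) ->
    (forall p, K p -> exists i, O i p) ->
    exists l : list I, forall p, K p -> exists i, List.In i l /\ O i p.

Definition image2 (f : pt -> pt) (K : pt -> Prop) (q : pt) : Prop :=
  exists p, K p /\ q = f p.

Definition interior_empty2 (K : pt -> Prop) : Prop :=
  ~ (exists p e, 0 < e /\ forall q, ball2 p e q -> K q).

Definition Umap (p : pt) : pt := (fst p / 2, (snd p + 1) / 2).
Definition Dmap (sj : R) (p : pt) : pt := ((fst p + sj) / 2, snd p / 2).

From Stdlib Require Import Reals Rtopology ClassicalEpsilon Classical List Lra Lia Psatz ZArith.
Open Scope R_scope.

(* [K] lies in the triangle x, y >= 0, x + y <= 1.  Unfolding the self-similarity n times,
   a point of [K] at a height strictly inside the dyadic row (M/2^n, (M+1)/2^n) has abscissa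
   at most 2^-n (top of the row - height) to the right of a point of a set E(n,M) built from
   {0} by n operations e |-> e/2 and e |-> {(s_j + e)/2 | j}.  Both operations preserve
   closed nowhere dense subsets of the line (the second by compactness of {s_j} and the Baire
   category theorem), so E(n,M) misses a whole interval [a, b]; hence [K] has no point
   (b, y) with y close enough to the top of the row, whereas a ball inside [K] would. *)

Definition closedR (P : R -> Prop) : Prop :=
  forall z, (forall eps, 0 < eps -> exists e, P e /\ Rabs (e - z) < eps) -> P z.

Definition codense (P : R -> Prop) : Prop :=
  forall a b, a < b -> exists x, a < x < b /\ ~ P x.

Lemma closedR_gap P x : closedR P -> ~ P x ->
  exists d, 0 < d /\ forall e, P e -> d <= Rabs (e - x).
Proof.
  intros HP Hx. apply NNPP; intro Hno. apply Hx, HP. intros eps Heps.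
  apply NNPP; intro Hfar. apply Hno. exists eps; split; [exact Heps|].
  intros e He. apply Rnot_lt_le. intro Hlt. apply Hfar. eauto.
Qed.

Lemma closed_codense_free_interval P a b : closedR P -> codense P -> a < b ->
  exists a' b', a < a' /\ a' < b' /\ b' < b /\ forall z, a' <= z <= b' -> ~ P z.
Proof.
  intros HP HPc Hab. destruct (HPc a b Hab) as [x [Hx Px]].
  destruct (closedR_gap P x HP Px) as [d [Hd Hgap]].
  set (r := Rmin (d/2) (Rmin ((x-a)/2) ((b-x)/2))).
  assert (Hr : 0 < r) by (unfold r; repeat apply Rmin_glb_lt; lra).
  assert (r <= d/2 /\ r <= (x-a)/2 /\ r <= (b-x)/2) as (Hrd & Hra & Hrb).
  { unfold r. repeat split; [apply Rmin_l| |];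
      (eapply Rle_trans; [apply Rmin_r|]); [apply Rmin_l|apply Rmin_r]. }
  exists (x - r), (x + r). repeat split; try lra.
  intros z Hz Pz. specialize (Hgap z Pz). unfold Rabs in Hgap; destruct Rcase_abs in Hgap; lra.
Qed.

Lemma nested_intervals (a b : nat -> R) :
  Un_growing a -> Un_decreasing b -> (forall n, a n <= b n) ->
  exists l, forall n, a n <= l <= b n.
Proof.
  intros Ha Hb Hab.
  assert (Hcross : forall n m, a n <= b m).
  { intros n m. destruct (Nat.le_ge_cases n m) as [Hnm|Hmn].
    - apply Rle_trans with (a m); [apply tech9|]; auto.
    - apply Rle_trans with (b n); [|apply decreasing_prop]; auto. }
  destruct (completeness (fun r => exists n, r = a n)) as [l [Hub Hlub]].
  - exists (b O). intros r [n ->]. apply Hcross.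
  - exists (a O), O. reflexivity.
  - exists l. intro n. split.
    + apply Hub. exists n. reflexivity.
    + apply Hlub. intros r [k ->]. apply Hcross.
Qed.

Lemma baire_codense (F : nat -> R -> Prop) :
  (forall j, closedR (F j)) -> (forall j, codense (F j)) -> codense (fun x => exists j, F j x).
Proof.
  intros Fclosed Fcodense a b Hab.
  set (Shrinks j (p q : R * R) := fst p < fst q /\ fst q < snd q /\ snd q < snd p /\
         forall z, fst q <= z <= snd q -> ~ F j z).
  assert (Hchoice : exists shrink : nat -> R * R -> R * R,
            forall j p, fst p < snd p -> Shrinks j p (shrink j p)).
  { destruct (choice (fun (jp : nat * (R * R)) q =>
                fst (snd jp) < snd (snd jp) -> Shrinks (fst jp) (snd jp) q)) as [f Hf].
    - intros [j [c d]]. destruct (Rlt_or_le c d) as [Hcd|Hdc].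
      + destruct (closed_codense_free_interval (F j) c d (Fclosed j) (Fcodense j) Hcd)
          as [c' [d' Hfree]].
        exists (c', d'). intros _. exact Hfree.
      + exists (c, d). simpl. lra.
    - exists (fun j p => f (j, p)). intros j p. exact (Hf (j, p)). }
  destruct Hchoice as [shrink Hshrink].
  set (iv := fix iv n := match n with O => (a, b) | S n => shrink n (iv n) end).
  assert (Hiv : forall n, Shrinks n (iv n) (iv (S n))).
  { assert (Hstep : forall n, iv (S n) = shrink n (iv n)) by reflexivity.
    induction n as [|n IH]; rewrite Hstep; apply Hshrink;
      [simpl; lra|now destruct IH as (_ & ? & _)]. }
  destruct (nested_intervals (fun n => fst (iv n)) (fun n => snd (iv n))) as [l Hl].
  - intro n. destruct (Hiv n) as [? _]. simpl in *. lra.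
  - intro n. destruct (Hiv n) as (_ & _ & ? & _). simpl in *. lra.
  - intro n. destruct n as [|n]; [simpl; lra|]. destruct (Hiv n) as (_ & ? & _). lra.
  - exists l. split.
    + destruct (Hiv O) as (H1 & _ & H3 & _). specialize (Hl 1%nat). simpl in *. lra.
    + intros [j Fl]. destruct (Hiv j) as (_ & _ & _ & Hfree). exact (Hfree l (Hl (S j)) Fl).
Qed.

Lemma closedR_singleton c : closedR (fun e => e = c).
Proof.
  intros z Hz. apply NNPP; intro Hzc.
  destruct (Hz (Rabs (c - z))) as [e [-> He]].
  - apply Rabs_pos_lt. lra.
  - lra.
Qed.

Lemma codense_singleton c : codense (fun e => e = c).
Proof.
  intros a b Hab. destruct (Rle_or_lt c ((a + b) / 2)).
  - exists ((a + b) / 2 + (b - a) / 4). lra.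
  - exists ((a + b) / 2). lra.
Qed.

Definition digit_image (d : nat -> R) (P : R -> Prop) (e : R) : Prop :=
  exists j e', P e' /\ e = (d j + e') / 2.

Lemma codense_digit_image d P : closedR P -> codense P -> codense (digit_image d P).
Proof.
  intros HP HPc a b Hab.
  destruct (baire_codense (fun j z => P (2 * z - d j))) with (a := a) (b := b)
    as [x [Hx Hnot]]; [| |exact Hab|].
  - intros j z Hz. apply HP. intros eps Heps.
    destruct (Hz (eps / 2)) as [e [Pe He]]; [lra|].
    exists (2 * e - d j). split; [exact Pe|].
    replace (2 * e - d j - (2 * z - d j)) with (2 * (e - z)) by ring.
    rewrite Rabs_mult, Rabs_pos_eq; lra.
  - intros j c c' Hc. destruct (HPc (2 * c - d j) (2 * c' - d j)) as [y [Hy Py]]; [lra|].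
    exists ((y + d j) / 2). split; [lra|].
    replace (2 * ((y + d j) / 2) - d j) with y by field. exact Py.
  - exists x. split; [exact Hx|]. intros [j [e' [Pe ->]]]. apply Hnot. exists j.
    replace (2 * ((d j + e') / 2) - d j) with e' by field. exact Pe.
Qed.

Section CompactDigits.

Variable d : nat -> R.
Hypothesis hd : compact (fun x => exists j, x = d j).

Lemma cluster_digit (k : nat -> nat) :
  exists j, forall eps N, 0 < eps -> exists p, (N <= p)%nat /\ Rabs (d (k p) - d j) < eps.
Proof.
  destruct (Bolzano_Weierstrass (fun p => d (k p)) _ hd) as [l Hl]; [intro p; eauto|].
  assert (Hdigit : exists j, l = d j).
  { apply NNPP; intro Hl'.
    destruct (Hl _ O (compact_P2 _ hd l Hl')) as [p [_ Hp]]. apply Hp. eauto. }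
  destruct Hdigit as [j ->]. exists j. intros eps N Heps.
  apply (Hl (disc (d j) (mkposreal eps Heps)) N).
  exists (mkposreal eps Heps). intros y Hy. exact Hy.
Qed.

Lemma closedR_digit_image P : closedR P -> closedR (digit_image d P).
Proof.
  intros HP z Hz.
  destruct (choice (fun (k : nat) (q : nat * R) =>
      P (snd q) /\ Rabs ((d (fst q) + snd q) / 2 - z) < / INR (S k))) as [q Hq].
  { intro k. destruct (Hz (/ INR (S k))) as [e [[j [e' [Pe ->]]] He]].
    - apply Rinv_0_lt_compat, lt_0_INR. lia.
    - exists (j, e'). auto. }
  destruct (cluster_digit (fun k => fst (q k))) as [j Hj].
  exists j, (2 * z - d j). split; [|field].
  apply HP. intros eps Heps.
  destruct (archimed_cor1 (eps / 4)) as [N [HN HN0]]; [lra|].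
  destruct (Hj (eps / 2) N) as [p [Hp Hclose]]; [lra|].
  destruct (Hq p) as [Pp Happrox].
  exists (snd (q p)). split; [exact Pp|].
  assert (Hinv : / INR (S p) <= / INR N).
  { apply Rinv_le_contravar; [apply lt_0_INR; lia|apply le_INR; lia]. }
  revert Hclose Happrox. generalize (d (fst (q p))) (snd (q p)). intros u v Hu Hv.
  unfold Rabs in *. repeat destruct Rcase_abs; lra.
Qed.

End CompactDigits.

Lemma compact_zero_digits : compact (fun x => exists j : nat, x = 0).
Proof.
  apply compact_eqDom with (fun x => 0 <= x <= 0); [apply compact_P3|].
  split; intros x Hx.
  - exists O. lra.
  - destruct Hx as [_ ->]. lra.
Qed.

(* [cell_offsets s n M] holds the abscissae of the lower-left corners of the level-[n]
   pieces of the attractor lying in the dyadic row [M/2^n, (M+1)/2^n]: the leading binary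
   digit of [M] tells whether the outermost map is [Umap] (upper half) or some [Dmap]. *)
Fixpoint cell_offsets (s : nat -> R) (n M : nat) : R -> Prop :=
  match n with
  | O => fun e => e = 0
  | S n => if (M <? 2 ^ n)%nat then digit_image s (cell_offsets s n M)
           else digit_image (fun _ => 0) (cell_offsets s n (M - 2 ^ n))
  end.

Lemma cell_offsets_closed_codense s : compact (fun x => exists j, x = s j) ->
  forall n M, closedR (cell_offsets s n M) /\ codense (cell_offsets s n M).
Proof.
  intros hs n. induction n as [|n IH]; intro M; simpl.
  - split; [apply closedR_singleton|apply codense_singleton].
  - destruct (M <? 2 ^ n)%nat.
    + destruct (IH M) as [Hcl Hcd].
      split; [apply closedR_digit_image|apply codense_digit_image]; assumption.
    + destruct (IH (M - 2 ^ n)%nat) as [Hcl Hcd].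
      split; [apply closedR_digit_image; [apply compact_zero_digits|]|apply codense_digit_image];
        assumption.
Qed.

Lemma ball2_abs_lt p e q : 0 < e -> ball2 p e q ->
  Rabs (fst q - fst p) < e /\ Rabs (snd q - snd p) < e.
Proof.
  unfold ball2. generalize (fst q - fst p) (snd q - snd p). intros u v He Huv.
  split; unfold Rabs; destruct Rcase_abs; nra.
Qed.

Lemma ball2_of_abs_lt p e q : 0 < e ->
  Rabs (fst q - fst p) < e / 2 -> Rabs (snd q - snd p) < e / 2 -> ball2 p e q.
Proof.
  unfold ball2. intros He Hx Hy.
  revert Hx Hy. unfold Rabs. repeat destruct Rcase_abs; intros; nra.
Qed.

Lemma compact2_bounded K : compact2 K ->
  exists B, forall p, K p -> Rabs (fst p) < B /\ Rabs (snd p) < B.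
Proof.
  intro hK.
  destruct (hK nat (fun n q => Rabs (fst q) < INR n /\ Rabs (snd q) < INR n)) as [l Hl].
  - intros n p [H1 H2].
    set (r := Rmin (INR n - Rabs (fst p)) (INR n - Rabs (snd p))).
    assert (Hr : 0 < r) by (apply Rmin_glb_lt; lra).
    exists r. split; [exact Hr|]. intros q Hq.
    destruct (ball2_abs_lt p r q Hr Hq) as [Hqx Hqy].
    assert (Hrx := Rmin_l (INR n - Rabs (fst p)) (INR n - Rabs (snd p))).
    assert (Hry := Rmin_r (INR n - Rabs (fst p)) (INR n - Rabs (snd p))).
    assert (Htx := Rabs_triang_inv (fst q) (fst p)).
    assert (Hty := Rabs_triang_inv (snd q) (snd p)).
    fold r in Hrx, Hry. lra.
  - intros p _. destruct (INR_unbounded (Rabs (fst p) + Rabs (snd p))) as [n Hn].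
    exists n. pose proof (Rabs_pos (fst p)). pose proof (Rabs_pos (snd p)). lra.
  - exists (INR (list_max l)). intros p Kp.
    destruct (Hl p Kp) as [i [Hi [H1 H2]]].
    assert (Hmax : INR i <= INR (list_max l)).
    { apply le_INR. apply (proj1 (Forall_forall _ l) (proj1 (list_max_le l _) (le_n _)) i Hi). }
    lra.
Qed.

(* The supremum [g] of [f] over [K] satisfies [g <= g/2 + b]. *)
Lemma le_of_halving_bound (K : pt -> Prop) (f : pt -> R) b :
  (exists B, forall p, K p -> f p <= B) ->
  (forall p, K p -> exists q, K q /\ f p <= f q / 2 + b) ->
  forall p, K p -> f p <= 2 * b.
Proof.
  intros [B HB] Hhalf p Kp.
  destruct (completeness (fun r => exists p, K p /\ r = f p)) as [g [Hub Hlub]].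
  - exists B. intros r [q [Kq ->]]. auto.
  - exists (f p). eauto.
  - assert (g <= g / 2 + b).
    { apply Hlub. intros r [q [Kq ->]]. destruct (Hhalf q Kq) as [q' [Kq' Hq']].
      assert (f q' <= g) by (apply Hub; eauto). lra. }
    assert (f p <= g) by (apply Hub; eauto). lra.
Qed.

Section SelfSimilarSet.

Variables (s : nat -> R) (K : pt -> Prop).
Hypothesis hrange : forall j, 0 <= s j <= 1.
Hypothesis hK : compact2 K.
Hypothesis hfix : forall q, K q <-> (image2 Umap K q \/ exists j, image2 (Dmap (s j)) K q).

Lemma self_similar_cases x y : K (x, y) ->
  (exists x' y', K (x', y') /\ x = x' / 2 /\ y = (y' + 1) / 2) \/
  (exists j x' y', K (x', y') /\ x = (x' + s j) / 2 /\ y = y' / 2).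
Proof.
  intro Kxy. apply hfix in Kxy.
  destruct Kxy as [[[x' y'] [Kp Heq]]|[j [[x' y'] [Kp Heq]]]]; injection Heq as -> ->.
  - left. exists x', y'. auto.
  - right. exists j, x', y'. auto.
Qed.

Lemma self_similar_in_triangle x y : K (x, y) -> 0 <= x /\ 0 <= y /\ x + y <= 1.
Proof.
  destruct (compact2_bounded K hK) as [B HB].
  assert (Hbound : forall f : pt -> R, (forall p, Rabs (f p) <= Rabs (fst p) + Rabs (snd p)) ->
            exists C, forall p, K p -> f p <= C).
  { intros f Hf. exists (2 * B). intros p Kp. destruct (HB p Kp).
    pose proof (Hf p). pose proof (Rle_abs (f p)). lra. }
  assert (Hhalf : forall (f : pt -> R) b,
      (forall x' y' j, f (x' / 2, (y' + 1) / 2) <= f (x', y') / 2 + b /\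
                       f ((x' + s j) / 2, y' / 2) <= f (x', y') / 2 + b) ->
      forall p, K p -> exists q, K q /\ f p <= f q / 2 + b).
  { intros f b Hf [x1 y1] Kp.
    destruct (self_similar_cases x1 y1 Kp)
      as [(x' & y' & Kq & -> & ->)|(j & x' & y' & Kq & -> & ->)];
      exists (x', y'); (split; [exact Kq|]);
      [exact (proj1 (Hf x' y' O))|exact (proj2 (Hf x' y' j))]. }
  intro Kxy. split; [|split].
  - enough (- x <= 2 * 0) by lra.
    refine (le_of_halving_bound K (fun p => - fst p) 0 _ _ (x, y) Kxy).
    + apply Hbound. intro p. cbv beta. rewrite Rabs_Ropp. pose proof (Rabs_pos (snd p)). lra.
    + apply Hhalf. intros x' y' j. specialize (hrange j). simpl. lra.
  - enough (- y <= 2 * 0) by lra.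
    refine (le_of_halving_bound K (fun p => - snd p) 0 _ _ (x, y) Kxy).
    + apply Hbound. intro p. cbv beta. rewrite Rabs_Ropp. pose proof (Rabs_pos (fst p)). lra.
    + apply Hhalf. intros x' y' j. simpl. lra.
  - enough (x + y <= 2 * (1 / 2)) by lra.
    refine (le_of_halving_bound K (fun p => fst p + snd p) (1 / 2) _ _ (x, y) Kxy).
    + apply Hbound. intro p. apply Rabs_triang.
    + apply Hhalf. intros x' y' j. specialize (hrange j). simpl. lra.
Qed.

Lemma INR_pow2 n : INR (2 ^ n) = 2 ^ n.
Proof. rewrite pow_INR. reflexivity. Qed.

Lemma cell_offset_near n : forall M x y, K (x, y) -> INR M < 2 ^ n * y < INR M + 1 ->
  exists e, cell_offsets s n M e /\ 0 <= 2 ^ n * (x - e) <= INR M + 1 - 2 ^ n * y.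
Proof.
  induction n as [|n IH]; intros M x y Kxy HM; simpl in HM |- *.
  - exists 0. split; [reflexivity|].
    destruct (self_similar_in_triangle x y Kxy) as (Hx & _ & Hxy).
    pose proof (pos_INR M). lra.
  - assert (Hpow : 0 < 2 ^ n) by (apply pow_lt; lra).
    destruct (self_similar_cases x y Kxy)
      as [(x' & y' & Kp & -> & ->)|(j & x' & y' & Kp & -> & ->)];
      destruct (self_similar_in_triangle x' y' Kp) as (Hx' & Hy' & Hxy');
      destruct (M <? 2 ^ n)%nat eqn:HMn.
    + apply Nat.ltb_lt, le_INR in HMn. rewrite S_INR, INR_pow2 in HMn. nra.
    + apply Nat.ltb_ge in HMn.
      assert (HMsub : INR (M - 2 ^ n) = INR M - 2 ^ n) by (rewrite minus_INR, INR_pow2; auto).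
      destruct (IH (M - 2 ^ n)%nat x' y' Kp) as [e' [He' Hbound]]; [rewrite HMsub; nra|].
      exists ((0 + e') / 2). split; [exists O, e'; auto|].
      rewrite HMsub in Hbound. nra.
    + destruct (IH M x' y' Kp) as [e' [He' Hbound]]; [nra|].
      exists ((s j + e') / 2). split; [exists j, e'; auto|]. nra.
    + apply Nat.ltb_ge, le_INR in HMn. rewrite INR_pow2 in HMn. nra.
Qed.

End SelfSimilarSet.

Lemma dyadic_row_near y0 delta : 0 <= y0 -> 0 < delta ->
  exists n M, y0 * 2 ^ n < INR M /\ INR M + 1 < (y0 + delta) * 2 ^ n.
Proof.
  intros Hy0 Hdelta.
  destruct (archimed_cor1 (delta / 2)) as [n [Hn Hn0]]; [lra|].
  assert (Hpow : INR n < 2 ^ n).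
  { rewrite <- INR_pow2. apply lt_INR, Nat.pow_gt_lin_r. lia. }
  assert (Hinv : / INR n * INR n = 1) by (apply Rinv_l; apply not_0_INR; lia).
  assert (Hn' : 0 < INR n) by (apply lt_0_INR; lia).
  assert (Hsmall : 2 < delta * 2 ^ n).
  { assert (0 < (delta / 2 - / INR n) * INR n) by (apply Rmult_lt_0_compat; lra).
    assert (0 < delta * (2 ^ n - INR n)) by (apply Rmult_lt_0_compat; lra).
    nra. }
  destruct (archimed (y0 * 2 ^ n)) as [Hup Hup'].
  exists n, (Z.to_nat (up (y0 * 2 ^ n))).
  rewrite INR_IZR_INZ, Z2Nat.id; [lra|].
  apply le_IZR. pose proof (pow_le 2 n). nra.
Qed.

Theorem mainTheorem7 (s : nat -> R)
  (hcomp : compact (fun x => exists j, x = s j))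
  (hrange : forall j, 0 <= s j <= 1)
  (hzero : exists j, s j = 0)
  (K : pt -> Prop)
  (hne : exists p, K p)
  (hK : compact2 K)
  (hfix : forall q, K q <-> (image2 Umap K q \/ exists j, image2 (Dmap (s j)) K q)) :
  interior_empty2 K.
Proof.
  intros [[x0 y0] [r [Hr Hball]]].
  assert (Hbox : forall x y, Rabs (x - x0) < r / 2 -> Rabs (y - y0) < r / 2 -> K (x, y)).
  { intros x y Hx Hy. apply Hball, ball2_of_abs_lt; assumption. }
  destruct (self_similar_in_triangle s K hrange hK hfix x0 y0) as (_ & Hy0 & _).
  { apply Hbox; rewrite Rminus_diag, Rabs_R0; lra. }
  destruct (dyadic_row_near y0 (r / 2) Hy0) as (n & M & HMlow & HMhigh); [lra|].
  destruct (cell_offsets_closed_codense s hcomp n M) as [Hclosed Hcodense].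
  destruct (closed_codense_free_interval _ (x0 - r / 2) (x0 + r / 2) Hclosed Hcodense)
    as (a & b & Ha & Hab & Hb & Hfree); [lra|].
  assert (Hpow : 1 <= 2 ^ n) by (apply pow_R1_Rle; lra).
  set (u := Rmin (1 / 2) (b - a)).
  assert (Hu : 0 < u <= b - a /\ u < 1).
  { unfold u. pose proof (Rmin_l (1 / 2) (b - a)). pose proof (Rmin_r (1 / 2) (b - a)).
    repeat split; try lra. apply Rmin_glb_lt; lra. }
  set (y := (INR M + 1 - u) / 2 ^ n).
  assert (Hy : 2 ^ n * y = INR M + 1 - u) by (unfold y; field; lra).
  destruct (cell_offset_near s K hrange hK hfix n M b y) as (e & He & Hnear).
  - apply Hbox; unfold Rabs; destruct Rcase_abs; nra.
  - lra.
  - apply (Hfree e); [nra|exact He].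
Qed.
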